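(* Let $n\ge 4$. The twisted braid group $\mathcal{TB}_n$ has the following reduced presentation: it is isomorphic to the group $$G=\langle\, \sigma_1, b_1, v_1,\dots,v_{n-1} \mid R\,\rangle$$ where $R$ consists of the relations $v_iv_{i+1}v_i=v_{i+1}v_iv_{i+1}$ ($1\le i\le n-2$), $v_iv_j=v_jv_i$ ($|i-j|\ge2$), $v_i^2=1$ ($1\le i\le n-1$), $\sigma_1v_j=v_j\sigma_1$ ($j>2$), $b_1^2=1$, $b_1v_j=v_jb_1$ ($j>1$), $(v_1\sigma_1v_1)(v_2\sigma_1v_2)(v_1\sigma_1v_1)=(v_2\sigma_1v_2)(v_1\sigma_1v_1)(v_2\sigma_1v_2)$, $\sigma_1(v_2v_3v_1v_2\sigma_1v_2v_1v_3v_2)=(v_2v_3v_1v_2\sigma_1v_2v_1v_3v_2)\sigma_1$, $b_1(v_1b_1v_1)=(v_1b_1v_1)b_1$, $\sigma_1(v_2v_1b_1v_1v_2)=(v_2v_1b_1v_1v_2)\sigma_1$, $(v_1b_1v_1)b_1\sigma_1b_1(v_1b_1v_1)=v_1\sigma_1v_1$. The isomorphism $G\to\mathcal{TB}_n$ sends $\sigma_1, b_1, v_1,\dots,v_{n-1}$ to the elements of the same names, and its inverse sends $v_i\mapsto v_i$, $\sigma_1\mapsto\sigma_1$, $b_1\mapsto b_1$, $\sigma_{i+1}\mapsto (v_i\cdots v_2v_1)(v_{i+1}\cdots v_3v_2)\sigma_1(v_2v_3\cdots v_{i+1})(v_1v_2\cdots v_i)$ for $1\le i\le n-2$, and $b_{i+1}\mapsto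 (v_iv_{i-1}\cdots v_1)b_1(v_1v_2\cdots v_i)$ for $1\le i\le n-1$.
   Context: The twisted braid group $\mathcal{TB}_n$ (the group of isotopy classes of twisted braids on $n$ strands, i.e. braids on $n$ strands with classical crossings, virtual crossings and bars on strands, under braid concatenation) is the group with generators $\sigma_1,\dots,\sigma_{n-1}$ (classical crossing of strands $i,i+1$), $v_1,\dots,v_{n-1}$ (virtual crossing of strands $i,i+1$) and $b_1,\dots,b_n$ (a bar on strand $i$), subject to the relations: braid relations $\sigma_i\sigma_{i+1}\sigma_i=\sigma_{i+1}\sigma_i\sigma_{i+1}$ ($1\le i\le n-2$), $\sigma_i\sigma_j=\sigma_j\sigma_i$ ($|i-j|\ge2$); virtual relations $v_i^2=1$, $v_iv_j=v_jv_i$ ($|i-j|\ge2$), $v_iv_{i+1}v_i=v_{i+1}v_iv_{i+1}$; twisted relations $b_i^2=1$ ($1\le i\le n$), $b_ib_j=b_jb_i$ ($i\ne j$); mixed relations $\sigma_iv_j=v_j\sigma_i$ ($|i-j|\ge2$), $v_i\sigma_{i+1}v_i=v_{i+1}\sigma_iv_{i+1}$ ($1\le i\le n-2$), $b_iv_i=v_ib_{i+1}$ ($1\le i\le n-1$), $b_ib_{i+1}\sigma_ib_{i+1}b_i=v_i\sigma_iv_i$ ($1\le i\le n-1$), $b_iv_j=v_jb_i$ ($j>i$ or $j<i-1$), $b_i\sigma_j=\sigma_jb_i$ ($j>i$ or $j<i-1$). *)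

(* Groups given by presentations are encoded as
   words over a generator type modulo the congruence generated by the relators
   and free cancellation. *)
From mathcomp Require Import all_boot.
Unset Printing Implicit Defensive.

(* A word: a list of letters (generator, exponent sign); true = +1, false = -1. *)
Definition word (X : Type) := seq (X * bool).

Definition winv {X : Type} (w : word X) : word X :=
  rev [seq (p.1, ~~ p.2) | p <- w].

(* Congruence on words generated by relation R: this is the presented group
   < X | R >, its elements being the classes of words. *)
Inductive weq {X : Type} (R : word X -> word X -> Prop) : word X -> word X -> Prop :=
| weq_refl w : weq R w w
| weq_sym u v : weq R u v -> weq R v u
| weq_trans u v w : weq R u v -> weq R v w -> weq R u w
| weq_rel u v : R u v -> weq R u v
| weq_cancel (x : X) (b : bool) : weq R [:: (x, b); (x, ~~ b)] [::]
| weq_cat u u' v v' : weq R u u' -> weq R v v' -> weq R (u ++ v) (u' ++ v').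

Definition wsubst {X Y : Type} (f : X -> word Y) (w : word X) : word Y :=
  flatten [seq (if p.2 then f p.1 else winv (f p.1)) | p <- w].

(* Indices are 0-based: TS k = sigma_(k+1) (k < n-1), TV k = v_(k+1) (k < n-1),
   TB k = b_(k+1) (k < n). *)
Inductive tbgen (n : nat) : Type :=
| TS of 'I_n.-1
| TV of 'I_n.-1
| TB of 'I_n.
Arguments TS {n}. Arguments TV {n}. Arguments TB {n}.

(* one-letter words, by 0-based nat index; empty word if out of range
   (never used out of range below) *)
Definition tS n (k : nat) : word (tbgen n) :=
  if @insub _ (fun k => k < n.-1) 'I_n.-1 k is Some i then [:: (TS i, true)] else [::].
Definition tV n (k : nat) : word (tbgen n) :=
  if @insub _ (fun k => k < n.-1) 'I_n.-1 k is Some i then [:: (TV i, true)] else [::].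
Definition tB n (k : nat) : word (tbgen n) :=
  if @insub _ (fun k => k < n) 'I_n k is Some i then [:: (TB i, true)] else [::].

Definition far (i j : nat) : Prop := (i + 2 <= j) \/ (j + 2 <= i).

Definition TBrel (n : nat) (u v : word (tbgen n)) : Prop :=
  (exists i, i.+1 < n.-1 /\ u = tS n i ++ tS n i.+1 ++ tS n i
                           /\ v = tS n i.+1 ++ tS n i ++ tS n i.+1) \/
  (exists i j, i < n.-1 /\ j < n.-1 /\ far i j /\ u = tS n i ++ tS n j /\ v = tS n j ++ tS n i) \/
  (exists i, i < n.-1 /\ u = tV n i ++ tV n i /\ v = [::]) \/
  (exists i j, i < n.-1 /\ j < n.-1 /\ far i j /\ u = tV n i ++ tV n j /\ v = tV n j ++ tV n i) \/
  (exists i, i.+1 < n.-1 /\ u = tV n i ++ tV n i.+1 ++ tV n i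
                           /\ v = tV n i.+1 ++ tV n i ++ tV n i.+1) \/
  (exists i, i < n /\ u = tB n i ++ tB n i /\ v = [::]) \/
  (exists i j, i < n /\ j < n /\ i != j /\ u = tB n i ++ tB n j /\ v = tB n j ++ tB n i) \/
  (exists i j, i < n.-1 /\ j < n.-1 /\ far i j /\ u = tS n i ++ tV n j /\ v = tV n j ++ tS n i) \/
  (exists i, i.+1 < n.-1 /\ u = tV n i ++ tS n i.+1 ++ tV n i
                           /\ v = tV n i.+1 ++ tS n i ++ tV n i.+1) \/
  (exists i, i < n.-1 /\ u = tB n i ++ tV n i /\ v = tV n i ++ tB n i.+1) \/
  (exists i, i < n.-1 /\ u = tB n i ++ tB n i.+1 ++ tS n i ++ tB n i.+1 ++ tB n i
                       /\ v = tV n i ++ tS n i ++ tV n i) \/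
  (exists i j, i < n /\ j < n.-1 /\ (i < j \/ j.+1 < i)
               /\ u = tB n i ++ tV n j /\ v = tV n j ++ tB n i) \/
  (exists i j, i < n /\ j < n.-1 /\ (i < j \/ j.+1 < i)
               /\ u = tB n i ++ tS n j /\ v = tS n j ++ tB n i).

Definition TBeq (n : nat) := weq (TBrel n).

(* GS = sigma_1, GB = b_1, GV k = v_(k+1) (k < n-1, 0-based). *)
Inductive ggen (n : nat) : Type :=
| GS
| GB
| GV of 'I_n.-1.
Arguments GV {n}.

Definition gS n : word (ggen n) := [:: (GS n, true)].
Definition gB n : word (ggen n) := [:: (GB n, true)].
Definition gV n (k : nat) : word (ggen n) :=
  if @insub _ (fun k => k < n.-1) 'I_n.-1 k is Some i then [:: (GV i, true)] else [::].

Definition Grel (n : nat) (u v : word (ggen n)) : Prop :=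
  let V := gV n in let S := gS n in let B := gB n in
  (exists i, i.+1 < n.-1 /\ u = V i ++ V i.+1 ++ V i /\ v = V i.+1 ++ V i ++ V i.+1) \/
  (exists i j, i < n.-1 /\ j < n.-1 /\ far i j /\ u = V i ++ V j /\ v = V j ++ V i) \/
  (exists i, i < n.-1 /\ u = V i ++ V i /\ v = [::]) \/
  (exists j, 2 <= j /\ j < n.-1 /\ u = S ++ V j /\ v = V j ++ S) \/
  (u = B ++ B /\ v = [::]) \/
  (exists j, 1 <= j /\ j < n.-1 /\ u = B ++ V j /\ v = V j ++ B) \/
  (let a := V 0 ++ S ++ V 0 in let c := V 1 ++ S ++ V 1 in
   u = a ++ c ++ a /\ v = c ++ a ++ c) \/
  (let t := V 1 ++ V 2 ++ V 0 ++ V 1 ++ S ++ V 1 ++ V 0 ++ V 2 ++ V 1 in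
   u = S ++ t /\ v = t ++ S) \/
  (let t := V 0 ++ B ++ V 0 in u = B ++ t /\ v = t ++ B) \/
  (let t := V 1 ++ V 0 ++ B ++ V 0 ++ V 1 in u = S ++ t /\ v = t ++ S) \/
  (let t := V 0 ++ B ++ V 0 in u = t ++ B ++ S ++ B ++ t /\ v = V 0 ++ S ++ V 0).

Definition Geq (n : nat) := weq (Grel n).

Definition phi_gen (n : nat) (x : ggen n) : word (tbgen n) :=
  match x with
  | GS => tS n 0
  | GB => tB n 0
  | GV i => tV n i
  end.

(* 1-based products of v's in G:
   gVdown a b = v_a v_(a-1) ... v_b ,  gVup b a = v_b v_(b+1) ... v_a *)
Definition gVdown n (a b : nat) : word (ggen n) :=
  flatten [seq gV n j.-1 | j <- rev (iota b (a.+1 - b))].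
Definition gVup n (b a : nat) : word (ggen n) :=
  flatten [seq gV n j.-1 | j <- iota b (a.+1 - b)].

(* For k = i (0-based index of sigma_(i+1), b_(i+1)):
   sigma_(i+1) |-> (v_i...v_1)(v_(i+1)...v_2) sigma_1 (v_2...v_(i+1))(v_1...v_i), i >= 1,
   sigma_1 |-> sigma_1,
   b_(i+1) |-> (v_i...v_1) b_1 (v_1...v_i)  (i = 0 gives b_1). *)
Definition psi_gen (n : nat) (x : tbgen n) : word (ggen n) :=
  match x with
  | TS k => if val k == 0 then gS n
            else gVdown n k 1 ++ gVdown n k.+1 2 ++ gS n ++ gVup n 2 k.+1 ++ gVup n 1 k
  | TV k => gV n k
  | TB k => gVdown n k 1 ++ gB n ++ gVup n 1 k
  end.

(* Both maps are substitutions of words, so it suffices to check that each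
   sends the defining relations of its source to consequences of the
   relations of its target, and that both composites fix the generators in
   the presented groups.

   In TB_n the relations v_i sigma_(i+1) v_i = v_(i+1) sigma_i v_(i+1) and
   b_i v_i = v_i b_(i+1) say that sigma_(i+1) and b_(i+1) are exactly the
   conjugates of sigma_1 and b_1 that psi assigns to them. This gives
   phi (psi x) = x and makes every relation of G a consequence of the
   relations of TB_n.

   In G, conjugation by the Coxeter element v_(n-1) ... v_1 sends v_i to
   v_(i+1), and the images under psi of sigma_i and b_i to those of
   sigma_(i+1) and b_(i+1). Hence the image of a relation of TB_n between
   generators of indices i <= j is the conjugate, by the i-th power of this
   element, of the same relation between indices 0 and j - i. These base
   cases reduce, by induction on j - i using that sigma_1 and b_1 commute
   with the distant v_j, to conjugates of the defining relations of G. *)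

From HB Require Import structures.
From mathcomp Require Import all_boot boolp zify.

Set Implicit Arguments.
Unset Strict Implicit.
Unset Printing Implicit Defensive.

Section Words.
Variable X : Type.
Implicit Types u v w : word X.

Lemma winv_cat u v : winv (u ++ v) = winv v ++ winv u.
Proof. by rewrite /winv map_cat rev_cat. Qed.

Lemma winvK : involutive (@winv X).
Proof.
move=> w; rewrite /winv map_rev revK -map_comp -[RHS]map_id.
by apply: eq_map => -[x b] /=; rewrite negbK.
Qed.

Variable R : word X -> word X -> Prop.

Lemma weq_catl u v w : weq R v w -> weq R (u ++ v) (u ++ w).
Proof. by move=> h; apply: weq_cat => //; apply: weq_refl. Qed.

Lemma weq_catr u v w : weq R v w -> weq R (v ++ u) (w ++ u).
Proof. by move=> h; apply: weq_cat => //; apply: weq_refl. Qed.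

Lemma weq_cat_winv w : weq R (w ++ winv w) [::].
Proof.
elim: w => [|[x b] w IH]; first exact: weq_refl.
apply: weq_trans (weq_cancel R x b).
have -> : ((x, b) :: w) ++ winv ((x, b) :: w) = [:: (x, b)] ++ (w ++ winv w) ++ [:: (x, ~~ b)].
  by rewrite -cat1s !winv_cat !catA.
rewrite -[[:: (x, b); _]]/([:: (x, b)] ++ [::] ++ [:: (x, ~~ b)]).
exact/weq_catl/weq_catr.
Qed.

Lemma weq_winv_cat w : weq R (winv w ++ w) [::].
Proof. by have := weq_cat_winv (winv w); rewrite winvK. Qed.

Lemma weq_winv u v : weq R u v -> weq R (winv u) (winv v).
Proof.
move=> huv; apply: (@weq_trans _ _ _ (winv u ++ v ++ winv v)).
  by rewrite -[X in weq _ X _]cats0; apply/weq_catl/weq_sym/weq_cat_winv.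
rewrite catA -[X in weq _ _ X]cat0s; apply: weq_catr.
by apply: weq_trans (weq_winv_cat u); apply/weq_catl/weq_sym.
Qed.

End Words.

Section Substitution.
Variables X Y : Type.
Implicit Types (f : X -> word Y) (u v w : word X).

Lemma wsubst_cat f u v : wsubst f (u ++ v) = wsubst f u ++ wsubst f v.
Proof. by rewrite /wsubst map_cat flatten_cat. Qed.

Lemma wsubst1 f x : wsubst f [:: (x, true)] = f x.
Proof. by rewrite /wsubst /= cats0. Qed.

Lemma wsubst_winv f w : wsubst f (winv w) = winv (wsubst f w).
Proof.
elim: w => // -[x b] w IH.
rewrite -cat1s winv_cat !wsubst_cat IH winv_cat /wsubst /= !cats0.
by case: b => //=; rewrite winvK.
Qed.

End Substitution.

Lemma weq_wsubst (X Y : Type) (R : word X -> word X -> Prop)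
    (S : word Y -> word Y -> Prop) (f : X -> word Y) :
    (forall u v : word X, R u v -> weq S (wsubst f u) (wsubst f v)) ->
  forall u v, weq R u v -> weq S (wsubst f u) (wsubst f v).
Proof.
move=> fR u v; elim=> {u v} [w|u v _|u v w _ huv _ hvw|u v /fR //|x b|u u' v v' _ hu _ hv].
- exact: weq_refl.
- exact: weq_sym.
- exact: weq_trans hvw.
- rewrite /wsubst /= cats0; case: b; [exact: weq_cat_winv | exact: weq_winv_cat].
- by rewrite !wsubst_cat; apply: weq_cat.
Qed.

Lemma wsubstK_weq (X Y : Type) (R : word X -> word X -> Prop)
    (f : X -> word Y) (g : Y -> word X) :
  (forall x, weq R (wsubst g (f x)) [:: (x, true)]) ->
  forall w, weq R (wsubst g (wsubst f w)) w.
Proof.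
move=> gfK; elim=> [|[x b] w IH]; first exact: weq_refl.
rewrite -cat1s !wsubst_cat; apply: weq_cat => //.
rewrite /wsubst /= !cats0; case: b; first exact: gfK.
by rewrite -/(wsubst _ _) wsubst_winv; apply: (weq_winv (gfK x)).
Qed.

Local Open Scope group_scope.

Section Presentation.
Variables (X : Type) (R : word X -> word X -> Prop).

Record presented := Presented {
  pclass : word X -> Prop;
  _ : exists w, pclass = weq R w }.

Definition cl (w : word X) : presented := @Presented (weq R w) (ex_intro _ w erefl).

Lemma clP (p : presented) : exists w, p = cl w.
Proof. by case: p => P [w defP]; exists w; subst P. Qed.

Lemma presented_ext p q : pclass p = pclass q -> p = q.
Proof.
case: p q => P hP [Q hQ] /= EPQ; subst Q.
by congr Presented; apply: Prop_irrelevance.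
Qed.

Lemma cl_eqP u v : cl u = cl v <-> weq R u v.
Proof.
split=> [/(congr1 pclass) /= Euv | huv].
  by apply: weq_sym; rewrite -Euv; apply: weq_refl.
apply: presented_ext; apply/funext=> w; apply/propext.
by split; [apply/weq_trans/weq_sym | apply: weq_trans].
Qed.

Lemma cl_rel u v : R u v -> cl u = cl v.
Proof. by move=> huv; apply/cl_eqP/weq_rel. Qed.

Definition repr_word (p : presented) : word X := projT1 (cid (clP p)).

Lemma repr_wordK : cancel repr_word cl.
Proof. by move=> p; rewrite /repr_word; case: cid. Qed.

(* Locked, so that unification never unfolds a product into some [cl _]. *)
Fact presented_key : unit. Proof. by []. Qed.
Let pmul p q := locked_with presented_key (cl (repr_word p ++ repr_word q)).
Let pinv p := locked_with presented_key (cl (winv (repr_word p))).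

Lemma pmul_cl u v : pmul (cl u) (cl v) = cl (u ++ v).
Proof.
rewrite /pmul unlock_with; apply/cl_eqP.
by apply: weq_cat; apply/cl_eqP; exact: repr_wordK.
Qed.

Lemma pinv_cl u : pinv (cl u) = cl (winv u).
Proof.
by rewrite /pinv unlock_with; apply/cl_eqP/weq_winv/cl_eqP; exact: repr_wordK.
Qed.

Let clE p : p = cl (repr_word p). Proof. by rewrite repr_wordK. Qed.

Let pmulA : associative pmul.
Proof. by move=> p q r; rewrite [p]clE [q]clE [r]clE !pmul_cl catA. Qed.

Let pmul1 : left_id (cl [::]) pmul.
Proof. by move=> p; rewrite [p]clE pmul_cl. Qed.

Let pmulp1 : right_id (cl [::]) pmul.
Proof. by move=> p; rewrite [p]clE pmul_cl cats0. Qed.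

Let pmulVp : left_inverse (cl [::]) pinv pmul.
Proof. by move=> p; rewrite [p]clE pinv_cl pmul_cl; apply/cl_eqP/weq_winv_cat. Qed.

Let pmulpV : right_inverse (cl [::]) pinv pmul.
Proof. by move=> p; rewrite [p]clE pinv_cl pmul_cl; apply/cl_eqP/weq_cat_winv. Qed.

(* A [groupType] must be a [choiceType]; [presented] has only the classical
   choice structure of boolp. *)
HB.instance Definition _ := gen_eqMixin presented.
HB.instance Definition _ := gen_choiceMixin presented.
HB.instance Definition _ :=
  isGroup.Build presented pmulA pmul1 pmulp1 pmulVp pmulpV.

Lemma clM u v : cl (u ++ v) = cl u * cl v.
Proof. by rewrite -pmul_cl. Qed.

End Presentation.
Arguments cl {X R}.
Arguments clM {X R}.

Section GroupFacts.
Variable G : groupType.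
Implicit Types a b x y z : G.

Lemma conjg_commute x y : commute x y -> x ^ y = x.
Proof. by move=> cxy; rewrite conjgE cxy mulKg. Qed.

Lemma commute_conj x y z : commute x y -> commute (x ^ z) (y ^ z).
Proof. by rewrite /commute -!conjMg => ->. Qed.

Lemma commute_conjr x y z : commute x y -> commute x z -> commute x (y ^ z).
Proof.
by move=> cxy cxz; rewrite conjgE; apply/commuteM/commuteM => //; apply: commuteV.
Qed.

Lemma commute_conjl x y z : commute (x ^ z^-1) y -> commute x (y ^ z).
Proof. by move=> /(commute_conj z); rewrite conjgKV. Qed.

Lemma braid_conj a b : a^-1 = a -> b^-1 = b -> a * b * a = b * a * b -> (a ^ b) ^ a = b.
Proof.
move=> inva invb braid.
have aa : a * a = 1 by rewrite -{1}inva mulVg.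
have bb : b * b = 1 by rewrite -{1}invb mulVg.
by rewrite !conjgE invb inva !mulgA braid -(mulgA _ b b) bb mulg1 -mulgA aa mulg1.
Qed.

Lemma conj_expg_shift z (a : nat -> G) m :
    (forall i, i.+1 < m -> a i ^ z = a i.+1) ->
  forall j k, j + k < m -> a j ^ (z ^+ k) = a (j + k).
Proof.
move=> shift j; elim=> [|k IH] lt_jkm; first by rewrite expg0 conjg1 addn0.
rewrite expgSr conjgM IH ?shift; [by rewrite addnS | lia | lia].
Qed.

End GroupFacts.

Section Involutions.
Variables (G : groupType) (V : nat -> G).
Hypothesis invV : forall i, (V i)^-1 = V i.
Hypothesis commuteV : forall i j, far i j -> commute (V i) (V j).

Lemma mulVV i : V i * V i = 1.
Proof. by rewrite -{1}invV mulVg. Qed.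

Lemma conjV x i : x ^ V i = V i * x * V i.
Proof. by rewrite conjgE invV mulgA. Qed.

Lemma prodV_rev s : (\prod_(j <- s) V j)^-1 = \prod_(j <- rev s) V j.
Proof. by rewrite -{1}[s]revK -prodgV; apply: eq_bigr => j _; rewrite invV. Qed.

Lemma commute_prodV x s :
  (forall j, j \in s -> commute x (V j)) -> commute x (\prod_(j <- s) V j).
Proof. by move=> cxV; rewrite big_seq; apply: commute_prod. Qed.

(* With 1-based indices, [sigma_lift x k] is
   (v_k..v_1)(v_(k+1)..v_2) x (v_2..v_(k+1))(v_1..v_k) and [bar_lift x k] is
   (v_k..v_1) x (v_1..v_k): the images under psi of sigma_(k+1) and b_(k+1)
   when x is sigma_1, resp. b_1. *)
Fact lift_key : unit. Proof. by []. Qed.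
Definition sigma_lift x k := locked_with lift_key
  (x ^ (\prod_(j <- iota 1 k) V j * \prod_(j <- iota 0 k) V j)).
Definition bar_lift x k := locked_with lift_key (x ^ \prod_(j <- iota 0 k) V j).

Lemma sigma_liftE x k :
  sigma_lift x k = x ^ (\prod_(j <- iota 1 k) V j * \prod_(j <- iota 0 k) V j).
Proof. by rewrite /sigma_lift; case: lift_key. Qed.

Lemma bar_liftE x k : bar_lift x k = x ^ \prod_(j <- iota 0 k) V j.
Proof. by rewrite /bar_lift; case: lift_key. Qed.

Lemma sigma_lift0 x : sigma_lift x 0 = x.
Proof. by rewrite sigma_liftE !big_nil mulg1 conjg1. Qed.

Lemma bar_lift0 x : bar_lift x 0 = x.
Proof. by rewrite bar_liftE big_nil conjg1. Qed.

Lemma sigma_liftS x k : sigma_lift x k.+1 = sigma_lift x k ^ (V k.+1 * V k).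
Proof.
rewrite !sigma_liftE -conjgM -[k.+1]addn1 !iotaD !big_cat !big_seq1 /= add1n add0n addn1.
congr (x ^ _); rewrite !mulgA; congr (_ * _); rewrite -!mulgA; congr (_ * _).
apply: commute_prodV => j; rewrite mem_iota => /andP[_ lt_jk].
by apply: commuteV; rewrite /far; lia.
Qed.

Lemma bar_liftS x k : bar_lift x k.+1 = bar_lift x k ^ V k.
Proof. by rewrite !bar_liftE -conjgM -[k.+1]addn1 iotaD big_cat big_seq1. Qed.

Lemma sigma_lift1E x : sigma_lift x 1 = x ^ (V 1 * V 0).
Proof. by rewrite sigma_liftS sigma_lift0. Qed.

Lemma sigma_lift2E x : sigma_lift x 2 = x ^ (V 1 * V 0 * V 2 * V 1).
Proof. by rewrite sigma_liftS sigma_lift1E -conjgM !mulgA. Qed.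

Lemma bar_lift1E x : bar_lift x 1 = x ^ V 0.
Proof. by rewrite bar_liftS bar_lift0. Qed.

Lemma bar_lift2E x : bar_lift x 2 = x ^ (V 0 * V 1).
Proof. by rewrite bar_liftS bar_lift1E conjgM. Qed.

Lemma conjV_sigma_liftS x k :
  V k * sigma_lift x k.+1 * V k = V k.+1 * sigma_lift x k * V k.+1.
Proof.
rewrite sigma_liftS conjgE invgM !invV !mulgA mulVV mul1g.
by rewrite -(mulgA _ (V k)) mulVV mulg1.
Qed.

Lemma bar_liftSV x k : bar_lift x k * V k = V k * bar_lift x k.+1.
Proof. by rewrite bar_liftS conjV !mulgA mulVV mul1g. Qed.

Lemma bar_liftV x k : x^-1 = x -> (bar_lift x k)^-1 = bar_lift x k.
Proof. by move=> invx; rewrite bar_liftE -conjVg invx. Qed.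

Section Coxeter.
Variable m : nat.
Hypothesis braidV : forall i, i.+1 < m -> V i * V i.+1 * V i = V i.+1 * V i * V i.+1.

(* v_m ... v_1 with 1-based indices; [x ^ coxeter] is v_1 ... v_m x v_m ... v_1. *)
Definition coxeter := \prod_(j <- rev (iota 0 m)) V j.

Lemma conj_coxeterV i : i.+1 < m -> V i ^ coxeter = V i.+1.
Proof.
move=> lt_i1m.
have cVi : commute (V i) (\prod_(j <- rev (iota (i + 2) (m - (i + 2)))) V j).
  apply: commute_prodV => j; rewrite mem_rev mem_iota => /andP[le_ij _].
  by apply: commuteV; rewrite /far; lia.
have cVi1 : commute (V i.+1) (\prod_(j <- rev (iota 0 i)) V j).
  apply: commute_prodV => j; rewrite mem_rev mem_iota => /andP[_ lt_ji].
  by apply: commuteV; rewrite /far; lia.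
rewrite /coxeter -{1}(subnKC lt_i1m) -addn2 !iotaD !rev_cat !big_cat /= !add0n.
rewrite big_cons big_seq1 !conjgM (conjg_commute cVi).
by rewrite braid_conj ?braidV // (conjg_commute cVi1).
Qed.

Lemma conj_coxeter_commute x d : d <= m ->
    (forall j, d <= j -> commute x (V j)) ->
  x ^ coxeter = x ^ \prod_(j <- rev (iota 0 d)) V j.
Proof.
move=> le_dm cxV; rewrite /coxeter -(subnKC le_dm) iotaD rev_cat big_cat conjgM /=.
rewrite (@conjg_commute _ x) //; apply: commute_prodV => j.
by rewrite mem_rev mem_iota => /andP[le_dj _]; apply: cxV.
Qed.

Lemma sigma_lift_coxeter x k : (forall j, 2 <= j -> commute x (V j)) ->
  k.+1 < m -> sigma_lift x k ^ coxeter = sigma_lift x k.+1.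
Proof.
move=> cxV; elim: k => [|k IH] lt_k1m.
  rewrite sigma_lift0 (conj_coxeter_commute _ cxV) // sigma_lift1E.
  by rewrite /= !big_cons big_nil mulg1.
rewrite sigma_liftS conjJg IH 1?ltnW // (conjMg (V k.+1)) !conj_coxeterV -?sigma_liftS //; lia.
Qed.

Lemma bar_lift_coxeter x k : (forall j, 1 <= j -> commute x (V j)) ->
  k < m -> bar_lift x k ^ coxeter = bar_lift x k.+1.
Proof.
move=> cxV; elim: k => [|k IH] lt_k1m.
  by rewrite bar_lift0 (conj_coxeter_commute _ cxV) // bar_lift1E big_seq1.
by rewrite bar_liftS conjJg IH ?conj_coxeterV -?bar_liftS // ltnW.
Qed.

End Coxeter.

End Involutions.

Section PsiImages.
Variables (n : nat) (H : groupType) (ev : word (ggen n) -> H) (V : nat -> H).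
Hypothesis evM : forall u v, ev (u ++ v) = ev u * ev v.
Hypothesis ev_nil : ev [::] = 1.
Hypothesis evV : forall j, ev (gV n j) = V j.
Hypothesis invV : forall j, (V j)^-1 = V j.

Lemma ev_flatten_gV (s : seq nat) :
  ev (flatten [seq gV n j.-1 | j <- s]) = \prod_(j <- s) V j.-1.
Proof. by elim: s => [|j s IH] /=; rewrite ?big_nil ?big_cons ?evM ?IH ?evV. Qed.

Lemma ev_gVup i k : ev (gVup n i.+1 (i + k)) = \prod_(j <- iota i k) V j.
Proof. by rewrite /gVup ev_flatten_gV subSS addKn -add1n iotaDl big_map. Qed.

Lemma ev_gVdown i k : ev (gVdown n (i + k) i.+1) = \prod_(j <- rev (iota i k)) V j.
Proof. by rewrite /gVdown ev_flatten_gV subSS addKn -add1n iotaDl -map_rev big_map. Qed.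

Lemma ev_psi_TS (k : 'I_n.-1) : ev (psi_gen n (TS k)) = sigma_lift V (ev (gS n)) k.
Proof.
case: k => -[|k] lt_k; first by rewrite sigma_lift0.
have -> : psi_gen n (TS (Ordinal lt_k)) =
    gVdown n (0 + k.+1) 1 ++ gVdown n (1 + k.+1) 2 ++ gS n ++
    gVup n 2 (1 + k.+1) ++ gVup n 1 (0 + k.+1) by [].
rewrite (evM (gVdown _ _ _)) (evM (gVdown _ _ _)) (evM (gS n)) (evM (gVup _ _ _)).
by rewrite !ev_gVdown !ev_gVup sigma_liftE conjgE invgM !prodV_rev // !mulgA.
Qed.

Lemma ev_psi_TB (k : 'I_n) : ev (psi_gen n (TB k)) = bar_lift V (ev (gB n)) k.
Proof.
case: k => k lt_k.
have -> : psi_gen n (TB (Ordinal lt_k)) = gVdown n (0 + k) 1 ++ gB n ++ gVup n 1 (0 + k) by [].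
rewrite (evM (gVdown _ _ _)) (evM (gB n)) ev_gVdown ev_gVup.
by rewrite bar_liftE conjgE prodV_rev // !mulgA.
Qed.

End PsiImages.

Section ReducedPresentation.
Variable n : nat.
Hypothesis n_ge4 : 4 <= n.

Definition vG i : presented (Grel n) := cl (gV n i).
Definition sG : presented (Grel n) := cl (gS n).
Definition bG : presented (Grel n) := cl (gB n).

Tactic Notation "Grel_case" integer(k) := rewrite -!clM -?catA; apply: cl_rel; do k right.

(* [gV n i] is the empty word out of range, so the relations on [vG] below
   hold for all indices. *)
Lemma vG_out i : n.-1 <= i -> vG i = 1.
Proof. by move=> le_n1i; rewrite /vG /gV insubF // ltnNge le_n1i. Qed.

Lemma invvG i : (vG i)^-1 = vG i.
Proof.
case: (ltnP i n.-1) => [lt_i | /vG_out->]; last exact: invg1.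
by apply: mulg1_eq; rewrite /vG; Grel_case 2; left; exists i.
Qed.

Lemma commute_vG_far i j : far i j -> commute (vG i) (vG j).
Proof.
move=> fij; case: (ltnP i n.-1) => [lt_i | /vG_out->]; last exact/commute_sym/commute1.
case: (ltnP j n.-1) => [lt_j | /vG_out->]; last exact: commute1.
by rewrite /commute /vG; Grel_case 1; left; exists i, j.
Qed.

Lemma braid_vG i : i.+1 < n.-1 -> vG i * vG i.+1 * vG i = vG i.+1 * vG i * vG i.+1.
Proof. by move=> lt_i1; rewrite /vG; Grel_case 0; left; exists i. Qed.

Lemma commute_sG_vG j : 2 <= j -> commute sG (vG j).
Proof.
move=> le2j; case: (ltnP j n.-1) => [lt_j | /vG_out->]; last exact: commute1.
by rewrite /commute /vG /sG; Grel_case 3; left; exists j.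
Qed.

Lemma invbG : bG^-1 = bG.
Proof. by apply: mulg1_eq; rewrite /bG; Grel_case 4; left. Qed.

Lemma commute_bG_vG j : 1 <= j -> commute bG (vG j).
Proof.
move=> le1j; case: (ltnP j n.-1) => [lt_j | /vG_out->]; last exact: commute1.
by rewrite /commute /vG /bG; Grel_case 5; left; exists j.
Qed.

Lemma braid_sG_conj :
  sG ^ vG 0 * sG ^ vG 1 * sG ^ vG 0 = sG ^ vG 1 * sG ^ vG 0 * sG ^ vG 1.
Proof. by rewrite !(conjV invvG) /vG /sG; Grel_case 6; left; cbv zeta; rewrite -!catA. Qed.

Local Notation sg := (sigma_lift vG sG).
Local Notation bg := (bar_lift vG bG).

Lemma commute_sG_sg2 : commute sG (sg 2).
Proof.
rewrite (sigma_lift2E commute_vG_far) conjgE !invgM !invvG /commute /vG /sG -!mulgA.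
by Grel_case 7; left; cbv zeta; rewrite -!catA.
Qed.

Lemma commute_bG_bg1 : commute bG (bg 1).
Proof.
rewrite bar_lift1E (conjV invvG) /commute /vG /bG -!mulgA.
by Grel_case 8; left; cbv zeta; rewrite -!catA.
Qed.

Lemma commute_sG_bg2 : commute sG (bg 2).
Proof.
rewrite bar_lift2E conjgE !invgM !invvG /commute /vG /bG /sG -!mulgA.
by Grel_case 9; left; cbv zeta; rewrite -!catA.
Qed.

Lemma bg1_relation : bg 1 * bG * sG * bG * bg 1 = vG 0 * sG * vG 0.
Proof.
rewrite bar_lift1E (conjV invvG) /vG /bG /sG.
by Grel_case 10; cbv zeta; rewrite -!catA.
Qed.

Local Notation rho := (coxeter vG n.-1).

Lemma vG_shift j k : j + k < n.-1 -> vG j ^ rho ^+ k = vG (j + k).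
Proof. exact/conj_expg_shift/(conj_coxeterV invvG commute_vG_far braid_vG). Qed.

Lemma sg_shift j k : j + k < n.-1 -> sg j ^ rho ^+ k = sg (j + k).
Proof.
apply: conj_expg_shift => i.
exact: (sigma_lift_coxeter invvG commute_vG_far braid_vG commute_sG_vG).
Qed.

Lemma bg_shift j k : j + k < n -> bg j ^ rho ^+ k = bg (j + k).
Proof.
apply: conj_expg_shift => i lt_i1n.
by apply: (bar_lift_coxeter invvG commute_vG_far braid_vG commute_bG_vG); lia.
Qed.

Lemma braid_sg0 : sg 0 * sg 1 * sg 0 = sg 1 * sg 0 * sg 1.
Proof.
apply: (conjg_inj (vG 0)); rewrite !conjMg sigma_lift0 (sigma_lift1E commute_vG_far) -conjgM.
by rewrite -(mulgA (vG 1)) (mulVV invvG) mulg1 braid_sG_conj.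
Qed.

Lemma commute_sG_sg d : commute sG (sg d.+2).
Proof.
elim: d => [|d IH]; first exact: commute_sG_sg2.
rewrite (sigma_liftS commute_vG_far); apply: commute_conjr => //.
by apply: commuteM; apply: commute_sG_vG.
Qed.

Lemma commute_vG0_sg d : commute (vG 0) (sg d.+2).
Proof.
elim: d => [|d IH].
  have [lt1 lt2] : 1 < n.-1 /\ 2 < n.-1 by lia.
  (* Conjugating back along the conjugator of [sg 2] turns [vG 0] into [vG 2]. *)
  rewrite (sigma_lift2E commute_vG_far); apply: commute_conjl; rewrite !invgM !invvG !mulgA.
  rewrite -(mulgA (vG 1) (vG 2)) (@commute_vG_far 2 0) ?mulgA ?conjgM; last by right.
  rewrite (braid_conj (invvG 0) (invvG 1) (braid_vG lt1)).
  rewrite (braid_conj (invvG 1) (invvG 2) (braid_vG lt2)).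
  exact/commute_sym/commute_sG_vG.
rewrite (sigma_liftS commute_vG_far); apply: commute_conjr => //.
by apply: commuteM; apply: commute_vG_far; rewrite /far; lia.
Qed.

Lemma commute_bG_bg d : commute bG (bg d.+1).
Proof.
elim: d => [|d IH]; first exact: commute_bG_bg1.
by rewrite bar_liftS; apply: commute_conjr => //; apply: commute_bG_vG.
Qed.

Lemma commute_vG0_bg d : commute (vG 0) (bg d.+2).
Proof.
elim: d => [|d IH].
  have lt1 : 1 < n.-1 by lia.
  rewrite bar_lift2E; apply: commute_conjl; rewrite !invgM !invvG conjgM.
  rewrite (braid_conj (invvG 0) (invvG 1) (braid_vG lt1)).
  exact/commute_sym/commute_bG_vG.
rewrite bar_liftS; apply: commute_conjr => //.
by apply: commute_vG_far; rewrite /far; lia.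
Qed.

Lemma commute_bG_sg d : commute bG (sg d.+1).
Proof.
elim: d => [|d IH].
  rewrite (sigma_lift1E commute_vG_far); apply: commute_conjl.
  rewrite !invgM !invvG -bar_lift2E.
  exact/commute_sym/commute_sG_bg2.
rewrite (sigma_liftS commute_vG_far); apply: commute_conjr => //.
by apply: commuteM; apply: commute_bG_vG.
Qed.

Lemma commute_sG_bg d : commute sG (bg d.+2).
Proof.
elim: d => [|d IH]; first exact: commute_sG_bg2.
by rewrite bar_liftS; apply: commute_conjr => //; apply: commute_sG_vG.
Qed.

Lemma bg_relation0 : bg 0 * bg 1 * sg 0 * bg 1 * bg 0 = vG 0 * sg 0 * vG 0.
Proof.
rewrite bar_lift0 sigma_lift0 -(mulgA _ (bg 1) bG) -commute_bG_bg1.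
by rewrite {1}commute_bG_bg1 mulgA bg1_relation.
Qed.

Lemma braid_sg i : i.+1 < n.-1 -> sg i * sg i.+1 * sg i = sg i.+1 * sg i * sg i.+1.
Proof.
move=> lt_i1; rewrite -[sg i]/(sg (0 + i)) -[sg i.+1]/(sg (1 + i)) -!sg_shift; try lia.
by rewrite -!conjMg braid_sg0.
Qed.

Lemma commute_sg_far i j : i + 2 <= j -> j < n.-1 -> commute (sg i) (sg j).
Proof.
move=> le_ij; have [d ->] : exists d, j = d.+2 + i by exists (j - i.+2); lia.
move=> lt_j; rewrite -[sg i]/(sg (0 + i)) -!sg_shift; try lia.
by apply: commute_conj; rewrite sigma_lift0; apply: commute_sG_sg.
Qed.

Lemma commute_sg_vG_far i j : i + 2 <= j -> j < n.-1 -> commute (sg i) (vG j).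
Proof.
move=> le_ij; have [d ->] : exists d, j = d.+2 + i by exists (j - i.+2); lia.
move=> lt_j; rewrite -[sg i]/(sg (0 + i)) -sg_shift -?vG_shift; try lia.
by apply: commute_conj; rewrite sigma_lift0; apply: commute_sG_vG.
Qed.

Lemma commute_vG_sg_far i j : i + 2 <= j -> j < n.-1 -> commute (vG i) (sg j).
Proof.
move=> le_ij; have [d ->] : exists d, j = d.+2 + i by exists (j - i.+2); lia.
move=> lt_j; rewrite -[vG i]/(vG (0 + i)) -sg_shift -?vG_shift; try lia.
exact/commute_conj/commute_vG0_sg.
Qed.

Lemma commute_bg_lt i j : i < j -> j < n -> commute (bg i) (bg j).
Proof.
move=> lt_ij; have [d ->] : exists d, j = d.+1 + i by exists (j - i.+1); lia.
move=> lt_j; rewrite -[bg i]/(bg (0 + i)) -!bg_shift; try lia.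
by apply: commute_conj; rewrite bar_lift0; apply: commute_bG_bg.
Qed.

Lemma commute_bg i j : i < n -> j < n -> commute (bg i) (bg j).
Proof.
move=> lt_i lt_j; case: (ltngtP i j) => [lt_ij | lt_ji | ->].
- exact: commute_bg_lt.
- exact/commute_sym/commute_bg_lt.
- exact: commute_refl.
Qed.

Lemma mulbgbg i : bg i * bg i = 1.
Proof. by rewrite -{1}(bar_liftV _ _ invbG) mulVg. Qed.

Lemma bg_relation i : i < n.-1 ->
  bg i * bg i.+1 * sg i * bg i.+1 * bg i = vG i * sg i * vG i.
Proof.
move=> lt_i; rewrite -[bg i]/(bg (0 + i)) -[bg i.+1]/(bg (1 + i)).
rewrite -[sg i]/(sg (0 + i)) -[vG i]/(vG (0 + i)) -!bg_shift -?sg_shift -?vG_shift; try lia.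
by rewrite -!conjMg bg_relation0.
Qed.

Lemma commute_bg_vG_lt i j : i < j -> j < n.-1 -> commute (bg i) (vG j).
Proof.
move=> lt_ij; have [d ->] : exists d, j = d.+1 + i by exists (j - i.+1); lia.
move=> lt_j; rewrite -[bg i]/(bg (0 + i)) -bg_shift -?vG_shift; try lia.
by apply: commute_conj; rewrite bar_lift0; apply: commute_bG_vG.
Qed.

Lemma commute_vG_bg_gt i j : j.+1 < i -> i < n -> commute (vG j) (bg i).
Proof.
move=> lt_ji; have [d ->] : exists d, i = d.+2 + j by exists (i - j.+2); lia.
move=> lt_i; rewrite -[vG j]/(vG (0 + j)) -bg_shift -?vG_shift; try lia.
exact/commute_conj/commute_vG0_bg.
Qed.

Lemma commute_bg_sg_lt i j : i < j -> j < n.-1 -> commute (bg i) (sg j).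
Proof.
move=> lt_ij; have [d ->] : exists d, j = d.+1 + i by exists (j - i.+1); lia.
move=> lt_j; rewrite -[bg i]/(bg (0 + i)) -bg_shift -?sg_shift; try lia.
by apply: commute_conj; rewrite bar_lift0; apply: commute_bG_sg.
Qed.

Lemma commute_sg_bg_gt i j : j.+1 < i -> i < n -> commute (sg j) (bg i).
Proof.
move=> lt_ji; have [d ->] : exists d, i = d.+2 + j by exists (i - j.+2); lia.
move=> lt_i; rewrite -[sg j]/(sg (0 + j)) -bg_shift -?sg_shift; try lia.
by apply: commute_conj; rewrite sigma_lift0; apply: commute_sG_bg.
Qed.

End ReducedPresentation.

Section PsiRelations.
Variable n : nat.
Hypothesis n_ge4 : 4 <= n.

Local Notation psi w := (@cl _ (Grel n) (wsubst (psi_gen n) w)).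
Local Notation sg := (sigma_lift (vG n) (sG n)).
Local Notation bg := (bar_lift (vG n) (bG n)).

Lemma psiM u v : psi (u ++ v) = psi u * psi v.
Proof. by rewrite wsubst_cat clM. Qed.

Lemma psi_tV i : psi (tV n i) = vG n i.
Proof.
by rewrite /tV /vG; case: insubP => [k _ <- | /negbTE lt_i]; rewrite ?wsubst1 // /gV insubF.
Qed.

Lemma psi_tS i : i < n.-1 -> psi (tS n i) = sg i.
Proof.
move=> lt_i; rewrite /tS insubT wsubst1 (@ev_psi_TS _ _ _ (vG n) clM) //; exact: invvG.
Qed.

Lemma psi_tB i : i < n -> psi (tB n i) = bg i.
Proof.
move=> lt_i; rewrite /tB insubT wsubst1 (@ev_psi_TB _ _ _ (vG n) clM) //; exact: invvG.
Qed.

Lemma Geq_psi u v : TBeq n u v -> Geq n (wsubst (psi_gen n) u) (wsubst (psi_gen n) v).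
Proof.
apply: weq_wsubst => {}u {}v rel; apply/cl_eqP.
case: rel => [[i [lt_i1 [-> ->]]] | rel].
  by rewrite !psiM !mulgA !psi_tS 1?braid_sg //; lia.
case: rel => [[i [j [lt_i [lt_j [[le_ij | le_ji] [-> ->]]]]]] | rel].
- by rewrite !psiM !psi_tS // commute_sg_far.
- by rewrite !psiM !psi_tS // -commute_sg_far.
case: rel => [[i [lt_i [-> ->]]] | rel].
  by rewrite !psiM !psi_tV (mulVV (invvG n)).
case: rel => [[i [j [lt_i [lt_j [fij [-> ->]]]]]] | rel].
  by rewrite !psiM !psi_tV commute_vG_far.
case: rel => [[i [lt_i1 [-> ->]]] | rel].
  by rewrite !psiM !mulgA !psi_tV braid_vG.
case: rel => [[i [lt_i [-> ->]]] | rel].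
  by rewrite !psiM !psi_tB // mulbgbg.
case: rel => [[i [j [lt_i [lt_j [_ [-> ->]]]]]] | rel].
  by rewrite !psiM !psi_tB // commute_bg.
case: rel => [[i [j [lt_i [lt_j [[le_ij | le_ji] [-> ->]]]]]] | rel].
- by rewrite !psiM psi_tS // psi_tV commute_sg_vG_far.
- by rewrite !psiM psi_tS // psi_tV -commute_vG_sg_far.
case: rel => [[i [lt_i1 [-> ->]]] | rel].
  rewrite !psiM !mulgA !psi_tV !psi_tS; try lia.
  exact: (conjV_sigma_liftS (invvG n) (commute_vG_far n)).
case: rel => [[i [lt_i [-> ->]]] | rel].
  by rewrite !psiM !psi_tV !psi_tB 1?(bar_liftSV (invvG n)) //; lia.
case: rel => [[i [lt_i [-> ->]]] | rel].
  by rewrite !psiM !mulgA !psi_tV !psi_tS // !psi_tB 1?bg_relation //; lia.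
case: rel => [[i [j [lt_i [lt_j [[lt_ij | lt_ji] [-> ->]]]]]] | rel].
- by rewrite !psiM psi_tB // psi_tV commute_bg_vG_lt.
- by rewrite !psiM psi_tB // psi_tV -commute_vG_bg_gt.
case: rel => [i [j [lt_i [lt_j [[lt_ij | lt_ji] [-> ->]]]]]].
- by rewrite !psiM psi_tB // psi_tS // commute_bg_sg_lt.
- by rewrite !psiM psi_tB // psi_tS // -commute_sg_bg_gt.
Qed.

Lemma phiK_Geq w : Geq n (wsubst (psi_gen n) (wsubst (@phi_gen n) w)) w.
Proof.
apply: wsubstK_weq => -[||i]; apply/cl_eqP => /=.
- by rewrite psi_tS ?sigma_lift0 //; lia.
- by rewrite psi_tB ?bar_lift0 //; lia.
- by rewrite psi_tV /vG /gV valK.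
Qed.

End PsiRelations.

Section TwistedBraidGroup.
Variable n : nat.

Definition vT i : presented (TBrel n) := cl (tV n i).
Definition sT i : presented (TBrel n) := cl (tS n i).
Definition bT i : presented (TBrel n) := cl (tB n i).

Tactic Notation "TBrel_case" integer(k) :=
  rewrite /commute /vT /sT /bT -!clM -?catA; apply: cl_rel; do k right.

Lemma vT_out i : n.-1 <= i -> vT i = 1.
Proof. by move=> le_n1i; rewrite /vT /tV insubF // ltnNge le_n1i. Qed.

Lemma invvT i : (vT i)^-1 = vT i.
Proof.
case: (ltnP i n.-1) => [lt_i | /vT_out->]; last exact: invg1.
by apply: mulg1_eq; TBrel_case 2; left; exists i.
Qed.

Lemma commute_vT_far i j : far i j -> commute (vT i) (vT j).
Proof.
move=> fij; case: (ltnP i n.-1) => [lt_i | /vT_out->]; last exact/commute_sym/commute1.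
case: (ltnP j n.-1) => [lt_j | /vT_out->]; last exact: commute1.
by TBrel_case 3; left; exists i, j.
Qed.

Lemma braid_vT i : i.+1 < n.-1 -> vT i * vT i.+1 * vT i = vT i.+1 * vT i * vT i.+1.
Proof. by move=> lt_i1; TBrel_case 4; left; exists i. Qed.

Lemma braid_sT i : i.+1 < n.-1 -> sT i * sT i.+1 * sT i = sT i.+1 * sT i * sT i.+1.
Proof. by move=> lt_i1; TBrel_case 0; left; exists i. Qed.

Lemma commute_sT_far i j : i < n.-1 -> j < n.-1 -> far i j -> commute (sT i) (sT j).
Proof. by move=> lt_i lt_j fij; TBrel_case 1; left; exists i, j. Qed.

Lemma invbT i : i < n -> (bT i)^-1 = bT i.
Proof. by move=> lt_i; apply: mulg1_eq; TBrel_case 5; left; exists i. Qed.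

Lemma commute_bT i j : i < n -> j < n -> i != j -> commute (bT i) (bT j).
Proof. by move=> lt_i lt_j nij; TBrel_case 6; left; exists i, j. Qed.

Lemma commute_sT_vT_far i j : i < n.-1 -> j < n.-1 -> far i j -> commute (sT i) (vT j).
Proof. by move=> lt_i lt_j fij; TBrel_case 7; left; exists i, j. Qed.

Lemma conjV_sT i : i.+1 < n.-1 -> vT i * sT i.+1 * vT i = vT i.+1 * sT i * vT i.+1.
Proof. by move=> lt_i1; TBrel_case 8; left; exists i. Qed.

Lemma bT_vT i : i < n.-1 -> bT i * vT i = vT i * bT i.+1.
Proof. by move=> lt_i; TBrel_case 9; left; exists i. Qed.

Lemma bT_relation i : i < n.-1 ->
  bT i * bT i.+1 * sT i * bT i.+1 * bT i = vT i * sT i * vT i.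
Proof. by move=> lt_i; TBrel_case 10; left; exists i. Qed.

Lemma commute_bT_vT i j : i < n -> j < n.-1 -> i < j \/ j.+1 < i -> commute (bT i) (vT j).
Proof. by move=> lt_i lt_j hij; TBrel_case 11; left; exists i, j. Qed.

Lemma commute_bT_sT i j : i < n -> j < n.-1 -> i < j \/ j.+1 < i -> commute (bT i) (sT j).
Proof. by move=> lt_i lt_j hij; TBrel_case 12; exists i, j. Qed.

Lemma sT_succ k : k.+1 < n.-1 -> sT k.+1 = sT k ^ (vT k.+1 * vT k).
Proof.
move=> lt_k1; apply: (mulgI (vT k)); apply: (mulIg (vT k)).
rewrite conjV_sT // conjgE invgM !invvT !mulgA (mulVV invvT k) mul1g.
by rewrite -(mulgA _ (vT k)) (mulVV invvT k) mulg1.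
Qed.

Lemma bT_succ k : k < n.-1 -> bT k.+1 = bT k ^ vT k.
Proof.
by move=> lt_k; rewrite (conjV invvT) -mulgA bT_vT // mulgA (mulVV invvT) mul1g.
Qed.

Lemma sigma_lift_sT k : k < n.-1 -> sigma_lift vT (sT 0) k = sT k.
Proof.
elim: k => [|k IH] lt_k; first exact: sigma_lift0.
by rewrite (sigma_liftS commute_vT_far) IH ?sT_succ // ltnW.
Qed.

Lemma bar_lift_bT k : k < n -> bar_lift vT (bT 0) k = bT k.
Proof.
elim: k => [|k IH] lt_k; first exact: bar_lift0.
by rewrite bar_liftS IH ?bT_succ //; lia.
Qed.

Hypothesis n_ge4 : 4 <= n.

Lemma braid_sT_conj :
  sT 0 ^ vT 0 * sT 0 ^ vT 1 * sT 0 ^ vT 0 = sT 0 ^ vT 1 * sT 0 ^ vT 0 * sT 0 ^ vT 1.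
Proof.
have lt1 : 1 < n.-1 by lia.
have -> : sT 0 ^ vT 1 = sT 1 ^ vT 0 by rewrite !(conjV invvT) conjV_sT.
by rewrite -!conjMg braid_sT.
Qed.

Lemma commute_sT0_sT2 : commute (sT 0) (sT 0 ^ (vT 1 * vT 0 * vT 2 * vT 1)).
Proof.
rewrite -(sigma_lift2E commute_vT_far) sigma_lift_sT; last lia.
by apply: commute_sT_far; rewrite /far; lia.
Qed.

Lemma commute_bT0_bT1 : commute (bT 0) (bT 0 ^ vT 0).
Proof.
have lt0 : 0 < n.-1 by lia.
by rewrite -bT_succ //; apply: commute_bT; lia.
Qed.

Lemma commute_sT0_bT2 : commute (sT 0) (bT 0 ^ (vT 0 * vT 1)).
Proof.
rewrite -bar_lift2E bar_lift_bT; last lia.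
by apply/commute_sym/commute_bT_sT; lia.
Qed.

Lemma bT1_relation : bT 0 ^ vT 0 * bT 0 * sT 0 * bT 0 * bT 0 ^ vT 0 = vT 0 * sT 0 * vT 0.
Proof.
have lt0 : 0 < n.-1 by lia.
have c01 : commute (bT 0) (bT 1) by apply: commute_bT; lia.
by rewrite -bT_succ // -(mulgA _ (bT 0) (bT 1)) c01 -{1}c01 mulgA bT_relation.
Qed.

Local Notation phi w := (@cl _ (TBrel n) (wsubst (@phi_gen n) w)).

Lemma phiM u v : phi (u ++ v) = phi u * phi v.
Proof. by rewrite wsubst_cat clM. Qed.

Lemma phi_gV i : phi (gV n i) = vT i.
Proof.
by rewrite /gV /vT; case: insubP => [k _ <- | /negbTE lt_i]; rewrite ?wsubst1 // /tV insubF.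
Qed.

Lemma phi_gS : phi (gS n) = sT 0.
Proof. by rewrite /gS wsubst1. Qed.

Lemma phi_gB : phi (gB n) = bT 0.
Proof. by rewrite /gB wsubst1. Qed.

Lemma TBeq_phi u v : Geq n u v -> TBeq n (wsubst (@phi_gen n) u) (wsubst (@phi_gen n) v).
Proof.
apply: weq_wsubst => {}u {}v rel; apply/cl_eqP.
case: rel => [[i [lt_i1 [-> ->]]] | rel].
  by rewrite !phiM !mulgA !phi_gV braid_vT.
case: rel => [[i [j [lt_i [lt_j [fij [-> ->]]]]]] | rel].
  by rewrite !phiM !phi_gV commute_vT_far.
case: rel => [[i [lt_i [-> ->]]] | rel].
  by rewrite !phiM !phi_gV (mulVV invvT).
case: rel => [[j [le2j [lt_j [-> ->]]]] | rel].
  by rewrite !phiM phi_gS phi_gV commute_sT_vT_far //; rewrite /far; lia.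
case: rel => [[-> ->] | rel].
  by rewrite !phiM phi_gB -{1}invbT ?mulVg //; lia.
case: rel => [[j [le1j [lt_j [-> ->]]]] | rel].
  by rewrite !phiM phi_gB phi_gV commute_bT_vT //; lia.
case: rel => [rel | rel].
  move: rel; cbv zeta => -[-> ->]; rewrite !phiM !phi_gV !phi_gS !mulgA.
  by move: braid_sT_conj; rewrite !(conjV invvT) !mulgA.
case: rel => [rel | rel].
  move: rel; cbv zeta => -[-> ->]; rewrite !phiM !phi_gV !phi_gS !mulgA.
  by move: commute_sT0_sT2; rewrite /commute conjgE !invgM !invvT !mulgA.
case: rel => [rel | rel].
  move: rel; cbv zeta => -[-> ->]; rewrite !phiM !phi_gV !phi_gB !mulgA.
  by move: commute_bT0_bT1; rewrite /commute (conjV invvT) !mulgA.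
case: rel => [rel | rel].
  move: rel; cbv zeta => -[-> ->]; rewrite !phiM !phi_gV !phi_gS !phi_gB !mulgA.
  by move: commute_sT0_bT2; rewrite /commute conjgE !invgM !invvT !mulgA.
move: rel; cbv zeta => -[-> ->]; rewrite !phiM !phi_gV !phi_gS !phi_gB !mulgA.
by move: bT1_relation; rewrite (conjV invvT) !mulgA.
Qed.

Lemma psiK_TBeq w : TBeq n (wsubst (@phi_gen n) (wsubst (psi_gen n) w)) w.
Proof.
apply: wsubstK_weq => -[k|k|k]; apply/cl_eqP.
- rewrite (ev_psi_TS phiM erefl phi_gV invvT) phi_gS sigma_lift_sT //.
  by rewrite /sT /tS valK.
- by rewrite -[psi_gen n _]/(gV n k) phi_gV /vT /tV valK.
- rewrite (ev_psi_TB phiM erefl phi_gV invvT) phi_gB bar_lift_bT //.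
  by rewrite /bT /tB valK.
Qed.

End TwistedBraidGroup.

Theorem theorem9 (n : nat) (hn : 4 <= n) :
  (forall u v : word (ggen n), Geq n u v -> TBeq n (wsubst (@phi_gen n) u) (wsubst (@phi_gen n) v)) /\
  (forall u v : word (tbgen n), TBeq n u v -> Geq n (wsubst (@psi_gen n) u) (wsubst (@psi_gen n) v)) /\
  (forall w : word (ggen n), Geq n (wsubst (@psi_gen n) (wsubst (@phi_gen n) w)) w) /\
  (forall w : word (tbgen n), TBeq n (wsubst (@phi_gen n) (wsubst (@psi_gen n) w)) w).
Proof.
split; first exact: TBeq_phi.
split; first exact: Geq_psi.
split; [exact: phiK_Geq | exact: psiK_TBeq].
Qed.
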